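(* Let $b,n\geq 2$ be integers, let $a=\frac{b^n-1}{b-1}$, let $d\in\mathbb{P}$ with $\gcd(a,d)=1$, and let $$A=\left(a,\ ba+d,\ b^2a+\tfrac{b^2-1}{b-1}d,\ \dots,\ b^{n-1}a+\tfrac{b^{n-1}-1}{b-1}d\right).$$ Then the type of $\langle A\rangle$ is $t(A)=n-1$, and $$PF(A)=\{F(A),\ F(A)-d,\ \dots,\ F(A)-(n-2)d\}.$$
   Context: $\mathbb{P}$ denotes the positive integers. $\langle A\rangle$ is the numerical semigroup of all nonnegative integer combinations of entries of $A$; $F(A)$ is the largest integer not in $\langle A\rangle$. An integer $u\notin\langle A\rangle$ is a pseudo-Frobenius number if $u+s\in\langle A\rangle$ for all $s\in\langle A\rangle\setminus\{0\}$; $PF(A)$ is the set of pseudo-Frobenius numbers and the type $t(A)$ is its cardinality. *)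

From mathcomp Require Import all_boot all_order all_algebra.
Set Implicit Arguments. Unset Strict Implicit. Unset Printing Implicit Defensive.
Import Order.TTheory GRing.Theory Num.Theory.
Local Open Scope ring_scope.

Definition in_sg (A : seq nat) (z : int) : Prop :=
  exists c : seq nat, size c = size A /\
    z = ((\sum_(i < size A) nth 0%N c i * nth 0%N A i)%N)%:Z.

Definition is_frobenius (A : seq nat) (F : int) : Prop :=
  ~ in_sg A F /\ forall z : int, F < z -> in_sg A z.

Definition is_PF (A : seq nat) (u : int) : Prop :=
  ~ in_sg A u /\ forall s : int, in_sg A s -> s != 0 -> in_sg A (u + s).

Definition gen (b a d i : nat) : nat :=
  (b ^ i * a + (b ^ i - 1) %/ (b - 1) * d)%N.

Definition genseq (b n d : nat) : seq nat :=
  let a := ((b ^ n - 1) %/ (b - 1))%N in [seq gen b a d i | i <- iota 0 n].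

(* Write a = [n]_b and [i] = (b^i - 1)/(b - 1), so that the i-th generator is
   a b^i + d [i].  Elements of <A> are the a P + d r with P = sum b^(i_j) and
   r = sum [i_j] (all i_j < n).  For fixed P the attainable r form an initial
   segment; it contains [0, a - 1] once P >= b^n, while for P < b^n its top R(P)
   satisfies R(P) + R(b^n - 1 - P) = a - n (complement the base-b digits).
   Since gcd(a, d) = 1 every integer is a P + d r with P integral and
   0 <= r < a, which gives F = a (b^n - 1) + d (a - 1).  Complementation then
   shows that every gap lies below some F - k d, 0 <= k <= n - 2, in the order
   of <A>, and these numbers are themselves pseudo-Frobenius, so they are
   exactly PF(A). *)

From mathcomp Require Import all_boot all_order all_algebra zify.
Set Implicit Arguments. Unset Strict Implicit. Unset Printing Implicit Defensive.
Import GRing.Theory Num.Theory.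

Fixpoint repunit (b i : nat) : nat := if i is j.+1 then b * repunit b j + 1 else 0.

Lemma repunitSr b i : repunit b i.+1 = repunit b i + b ^ i.
Proof.
elim: i => [|i IHi]; first by rewrite /= muln0 expn0.
change (repunit b i.+2) with (b * repunit b i.+1 + 1).
by rewrite {1}IHi mulnDr expnS /= addnAC.
Qed.

Lemma repunitE b i : 1 < b -> (b ^ i - 1) %/ (b - 1) = repunit b i.
Proof.
move=> b_gt1; have b_gt0 := ltnW b_gt1.
suff <- : (b - 1) * repunit b i = b ^ i - 1 by rewrite mulKn ?subn_gt0.
elim: i => [|i IHi]; first by rewrite muln0 expn0.
rewrite repunitSr mulnDr IHi expnS mulnBl mul1n.
have : 0 < b ^ i by rewrite expn_gt0 b_gt0.
have : b ^ i <= b * b ^ i by rewrite leq_pmull.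
lia.
Qed.

Lemma leq_repunit b i : 0 < b -> i <= repunit b i.
Proof.
move=> b_gt0; elim: i => // i IHi; rewrite repunitSr.
have : 0 < b ^ i by rewrite expn_gt0 b_gt0.
lia.
Qed.

Section Repsum.

Variable b : nat.

Inductive repsum (n : nat) : nat -> nat -> Prop :=
| repsum0 : repsum n 0 0
| repsumS P r i : i < n -> repsum n P r -> repsum n (P + b ^ i) (r + repunit b i).

Lemma repsum_add n P r P' r' :
  repsum n P r -> repsum n P' r' -> repsum n (P + P') (r + r').
Proof.
move=> sPr; elim=> [|P1 r1 i lt_in _ IH]; first by rewrite !addn0.
by rewrite !addnA; apply: repsumS.
Qed.

Lemma repsum_add_copies n P r i m : i < n -> repsum n P r ->
  repsum n (P + m * b ^ i) (r + m * repunit b i).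
Proof.
move=> lt_in sPr; elim: m => [|m IHm]; first by rewrite !mul0n !addn0.
by rewrite !mulSn !addnA ![_ + _ + m * _]addnAC; apply: repsumS.
Qed.

Lemma repsum_add_ones n P r m : 0 < n -> repsum n P r -> repsum n (P + m) r.
Proof. by move=> n_gt0 /(repsum_add_copies m n_gt0); rewrite expn0 muln1 muln0 addn0. Qed.

(* Trading one copy of b^(j+1) for b copies of b^j lowers r by exactly 1. *)
Lemma repsum_pred n P r : repsum n P r -> repsum n P r.-1.
Proof.
elim=> [|P1 r1 i lt_in sPr IH]; first exact: repsum0.
case: (posnP r1) => [r1_0|r1_gt0].
- rewrite r1_0 in sPr *; case: i lt_in => [|j] lt_jn; first exact: repsumS.
  rewrite expnS add0n /= addn1 /= -[b * repunit b j]add0n.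
  exact: repsum_add_copies (ltnW lt_jn) sPr.
- by rewrite -(prednK r1_gt0) addSn /=; apply: repsumS.
Qed.

Lemma repsum_leq n P r r' : r' <= r -> repsum n P r -> repsum n P r'.
Proof. by move=> /subnK <-; elim: (r - r') => // k IHk /repsum_pred. Qed.

Lemma repsum_top n : 0 < n -> repsum n (b ^ n) (repunit b n - 1).
Proof.
case: n => // n _; have := repsum_add_copies b (ltnSn n) (repsum0 n.+1).
by rewrite !add0n -expnS /= addnK.
Qed.

Lemma repsum_pow_pred n i : 0 < b -> i < n ->
  exists2 P, P + 1 = b ^ i & exists2 r, r + i = repunit b i & repsum n P r.
Proof.
move=> b_gt0; elim: i => [|i IHi] lt_in.
  by exists 0 => //; exists 0 => //; apply: repsum0.
have [P eP [r er sPr]] := IHi (ltnW lt_in).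
have := repsum_add_copies (b - 1) (ltnW lt_in) sPr.
exists (P + (b - 1) * b ^ i); last exists (r + (b - 1) * repunit b i) => //.
- have : b ^ i <= b * b ^ i by rewrite leq_pmull.
  rewrite expnS mulnBl mul1n; lia.
- have : repunit b i <= b * repunit b i by rewrite leq_pmull.
  rewrite /= mulnBl mul1n; lia.
Qed.

Lemma repsum_lift n P r : repsum n P r -> repsum n.+1 (b * P) (r + P).
Proof.
elim=> [|P1 r1 i lt_in _ IH]; first by rewrite muln0; apply: repsum0.
have := repsumS (lt_in : i.+1 < n.+1) IH.
by rewrite repunitSr expnS mulnDr; congr (repsum _ _ _); lia.
Qed.

Lemma repsum_unlift n P r : repsum n.+1 P r ->
  exists c P' r', [/\ repsum n P' r', P = c + b * P' & r = r' + P'].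
Proof.
elim=> [|P1 r1 i lt_in _ [c [P' [r' [sPr' -> ->]]]]].
  by exists 0, 0, 0; split; [apply: repsum0 | rewrite muln0 |].
case: i lt_in => [|j] lt_jn.
- by exists c.+1, P', r'; split; [| rewrite expn0; lia | exact: addn0].
- exists c, (P' + b ^ j), (r' + repunit b j); split; first exact: repsumS.
    by rewrite expnS mulnDr; lia.
  by rewrite repunitSr; lia.
Qed.

Lemma repsum_ub n P r : 0 < b -> repsum n P r -> P < b ^ n -> r + n <= repunit b n.
Proof.
move=> b_gt0; elim: n P r => [|n IHn] P r; first by case.
move=> /repsum_unlift [c [P' [r' [sPr' -> ->]]]] lt_P.
have lt_P' : P' < b ^ n by rewrite -(ltn_pmul2l b_gt0) -expnS; lia.
have := IHn _ _ sPr' lt_P'; rewrite repunitSr; lia.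
Qed.

(* Take the base-b digits of P and of its complement b^n - 1 - P. *)
Lemma repsum_complement n P : 0 < b -> P < b ^ n -> exists r1 r2,
  [/\ repsum n P r1, repsum n (b ^ n - 1 - P) r2 & r1 + r2 + n = repunit b n].
Proof.
move=> b_gt0; elim: n P => [|n IHn] P lt_P.
  rewrite expn0 ltnS leqn0 in lt_P; rewrite (eqP lt_P).
  by exists 0, 0; split => //; apply: repsum0.
have lt_Pb : P %/ b < b ^ n by rewrite ltn_divLR // -expnSr.
have lt_Pmod : P %% b < b by rewrite ltn_mod.
have [r1 [r2 [sP1 sP2 er]]] := IHn _ lt_Pb.
exists (r1 + P %/ b), (r2 + (b ^ n - 1 - P %/ b)); split.
- have := repsum_add_ones (P %% b) (ltn0Sn n) (repsum_lift sP1).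
  by rewrite mulnC -divn_eq.
- have -> : b ^ n.+1 - 1 - P = b * (b ^ n - 1 - P %/ b) + (b - 1 - P %% b).
    have : b * (P %/ b) + b <= b * b ^ n by rewrite addnC -mulnS leq_mul2l lt_Pb orbT.
    rewrite expnS [in LHS](divn_eq P b) !mulnBr muln1 [P %/ b * b]mulnC.
    move: (b * b ^ n) (b * (P %/ b)) (P %% b) lt_Pmod => B Q m lt_m; lia.
  exact: repsum_add_ones (ltn0Sn n) (repsum_lift sP2).
- have : 0 < b ^ n by rewrite expn_gt0 b_gt0.
  rewrite repunitSr; lia.
Qed.

End Repsum.

Lemma coprime_mul_residue a d z : 0 < a -> 0 < d -> coprime a d ->
  exists2 r, r < a & z = d * r %[mod a].
Proof.
move=> a_gt0 d_gt0 cop; have [x lt_xa] := Bezoutl d a_gt0.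
rewrite (eqP cop) => /dvdnP [q eq].
have inv_d : d * (a - x) = a * (d - q) + 1.
  have : x * d < a * d by rewrite ltn_mul2r d_gt0 lt_xa.
  rewrite !mulnBr [d * a]mulnC [d * x]mulnC [a * q]mulnC; lia.
exists ((z * (a - x)) %% a); first by rewrite ltn_mod.
by rewrite modnMmr mulnCA inv_d mulnDr muln1 mulnCA -modnDml modnMr.
Qed.

Section PseudoFrobenius.

Local Open Scope ring_scope.

Lemma in_sg_nat (A : seq nat) (z : int) : in_sg A z -> exists u : nat, z = u%:Z.
Proof. by case=> c [_ ->]; eexists. Qed.

(* PF(A) consists of the maximal gaps for the order u <=_S v iff v - u \in <A>. *)
Lemma is_PF_iff_dominating (A : seq nat) (F : int) (M : seq int) :
  0 <= F -> is_frobenius A F -> {in M, forall m, is_PF A m} ->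
  (forall u : int, 0 <= u -> ~ in_sg A u -> exists2 s, in_sg A s & u + s \in M) ->
  forall u, is_PF A u <-> u \in M.
Proof.
move=> F_ge0 [F_notin F_max] M_PF dom u; split => [[u_notin u_PF] | /M_PF //].
have [u_lt0 | u_ge0] := ltrP u 0.
  have := u_PF (F - u) (F_max _ _) _; rewrite addrCA subrr addr0 => F_in.
  by case: F_notin; apply: F_in; lia.
have [s s_in us_M] := dom u u_ge0 u_notin.
have [s0 | s_neq0] := eqVneq s 0; first by rewrite s0 addr0 in us_M.
have [us_notin _] := M_PF _ us_M.
by case: (us_notin (u_PF _ s_in s_neq0)).
Qed.

End PseudoFrobenius.

Section GeneratedSemigroup.

Variables b n d : nat.
Hypothesis b_gt1 : 1 < b.

Local Notation a := (repunit b n).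

Let b_gt0 : 0 < b. Proof. exact: ltnW. Qed.

Lemma size_genseq : size (genseq b n d) = n.
Proof. by rewrite size_map size_iota. Qed.

Lemma nth_genseq i : i < n ->
  nth 0 (genseq b n d) i = a * b ^ i + d * repunit b i.
Proof.
move=> lt_in; rewrite (nth_map 0) ?size_iota // nth_iota // add0n /gen.
by rewrite !repunitE // mulnC [_ * d]mulnC.
Qed.

Definition in_S (u : nat) : Prop := exists P r, repsum b n P r /\ u = a * P + d * r.

Lemma in_sg_genseq u : in_sg (genseq b n d) u%:Z <-> in_S u.
Proof.
split.
- case=> c [_ /eqP]; rewrite eqz_nat size_genseq => /eqP ->.
  suff partial k : k <= n -> exists P r, repsum b n P r /\
      \sum_(i < k) nth 0 c i * nth 0 (genseq b n d) i = a * P + d * r.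
    exact: partial.
  elim: k => [|k IHk] lt_kn.
    by exists 0, 0; rewrite big_ord0 !muln0; split => //; apply: repsum0.
  have [P [r [sPr e]]] := IHk (ltnW lt_kn).
  exists (P + nth 0 c k * b ^ k), (r + nth 0 c k * repunit b k).
  split; first exact: repsum_add_copies.
  rewrite big_ord_recr /= e nth_genseq // !mulnDr !mulnA [a * _]mulnC [d * _]mulnC; lia.
- case=> P [r [sPr ->]]; elim: sPr => [|P1 r1 i lt_in _ [c [size_c e]]].
    exists (nseq n 0); rewrite size_nseq size_genseq; split => //.
    by rewrite big1 ?muln0 // => i _; rewrite nth_nseq if_same.
  exists (incr_nth c i); rewrite size_incr_nth size_c size_genseq lt_in; split => //.
  move: e; rewrite size_genseq => /eqP; rewrite !eqz_nat => /eqP e.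
  under eq_bigr => j _ do rewrite nth_incr_nth mulnDl.
  rewrite big_split /= -e (bigD1 (Ordinal lt_in)) //= eqxx mul1n big1 ?addn0.
    by rewrite nth_genseq // !mulnDr; lia.
  by move=> j /negbTE; rewrite -val_eqE /= eq_sym => ->.
Qed.

Lemma in_S_add x y : in_S x -> in_S y -> in_S (x + y).
Proof.
move=> [P [r [sPr ->]]] [P' [r' [sPr' ->]]].
by exists (P + P'), (r + r'); split; [apply: repsum_add | lia].
Qed.

Hypothesis n_gt1 : 1 < n.

Let n_gt0 : 0 < n. Proof. exact: ltnW. Qed.
Let n_le_a : n <= a. Proof. exact: leq_repunit. Qed.

Lemma in_S_ge_pow P r : b ^ n <= P -> r < a -> in_S (a * P + d * r).
Proof.
move=> le_P lt_r; exists P, r; split => //.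
rewrite -(subnKC le_P); apply: repsum_add_ones n_gt0 _.
by apply: repsum_leq (repsum_top b n_gt0); lia.
Qed.

Definition pfrob (k : nat) : nat := a * (b ^ n - 1) + d * (a - 1 - k).

Lemma pfrob_add_gen k i : k <= n - 2 -> i < n ->
  in_S (pfrob k + (a * b ^ i + d * repunit b i)).
Proof.
rewrite /pfrob => le_k lt_in; have pow_gt0 : 0 < b ^ n by rewrite expn_gt0 b_gt0.
have [le_ik | lt_ki] := leqP i k.
- have [P eP [r er sPr]] := repsum_pow_pred b_gt0 lt_in.
  exists (b ^ n + P), (a - 1 - k + repunit b i); split.
    by apply: repsum_leq (repsum_add (repsum_top b n_gt0) sPr); lia.
  rewrite -eP; nia.
- have le_i := leq_repunit i b_gt0.
  have s_i : repsum b n (b ^ i) (repunit b i).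
    by have := repsumS lt_in (repsum0 b n); rewrite !add0n.
  exists (b ^ i + (b ^ n - 1 + d)), (repunit b i - 1 - k); split.
    by apply: repsum_add_ones n_gt0 _; apply: repsum_leq s_i; lia.
  nia.
Qed.

Lemma pfrob_add k s : k <= n - 2 -> in_S s -> 0 < s -> in_S (pfrob k + s).
Proof.
move=> le_k [P [r [sPr ->]]]; case: sPr => [|P' r' i lt_in sPr'] s_gt0.
  by rewrite !muln0 in s_gt0.
have -> : pfrob k + (a * (P' + b ^ i) + d * (r' + repunit b i)) =
  pfrob k + (a * b ^ i + d * repunit b i) + (a * P' + d * r') by rewrite !mulnDr; lia.
by apply: in_S_add (pfrob_add_gen le_k lt_in) _; exists P', r'.
Qed.

Hypotheses (d_gt0 : 0 < d) (coprime_ad : coprime a d).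

Lemma residue_split z : exists2 r, r < a &
  (exists P, z = a * P + d * r) \/ (exists2 m, 0 < m & z + a * m = d * r).
Proof.
have [r lt_r e] := coprime_mul_residue z (leq_trans n_gt0 n_le_a) d_gt0 coprime_ad.
exists r => //; have [le_dr | lt_z] := leqP (d * r) z.
- left; move/eqP: e; rewrite eqn_mod_dvd // => /dvdnP [P eP].
  by exists P; rewrite mulnC -eP subnK.
- right; move/eqP: e; rewrite eq_sym eqn_mod_dvd ?(ltnW lt_z) // => /dvdnP [m em].
  exists m; last by rewrite mulnC -em subnKC // ltnW.
  by case: m em => // em; rewrite mul0n in em; lia.
Qed.

Lemma pfrob_notin k : k <= n - 2 -> ~ in_S (pfrob k).
Proof.
rewrite /pfrob => le_k [P [r [sPr e]]]; have [lt_P | le_P] := ltnP P (b ^ n).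
- have le_r := repsum_ub b_gt0 sPr lt_P.
  have le_aP : a * P <= a * (b ^ n - 1) by rewrite leq_mul2l; lia.
  have : d * r < d * (a - 1 - k) by rewrite ltn_pmul2l //; lia.
  lia.
- have lt_aP : a * (b ^ n - 1) < a * P by rewrite ltn_pmul2l; lia.
  have lt_r : r < a - 1 - k by rewrite -(ltn_pmul2l d_gt0); lia.
  have : a %| d * (a - 1 - k - r).
    apply/dvdnP; exists (P - (b ^ n - 1)).
    rewrite mulnBr mulnBl [P * a]mulnC [(b ^ n - 1) * a]mulnC; lia.
  by rewrite Gauss_dvdr // => /dvdn_leq; lia.
Qed.

Lemma in_S_gt_pfrob0 z : pfrob 0 < z -> in_S z.
Proof.
rewrite /pfrob subn0 => lt_z; have [r lt_r split_z] := residue_split z.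
have le_dr : d * r <= d * (a - 1) by rewrite leq_mul2l; lia.
case: split_z => [[P eP] | [m _ em]]; last by exfalso; nia.
rewrite eP; apply: in_S_ge_pow => //.
have : a * (b ^ n - 1) < a * P by lia.
rewrite ltn_mul2l; lia.
Qed.

Lemma gap_dominated_lt_pow P r : P < b ^ n -> r < a -> ~ in_S (a * P + d * r) ->
  exists k s, [/\ k <= n - 2, in_S s & a * P + d * r + s = pfrob k].
Proof.
move=> lt_P lt_r gap; have [r1 [r2 [sP1 sP2 er]]] := repsum_complement b_gt0 lt_P.
have lt_r1 : r1 < r.
  rewrite ltnNge; apply/negP => le_r; apply: gap.
  by exists P, r; split => //; apply: repsum_leq sP1.
(* This k makes 0 <= a - 1 - k - r <= r2. *)
set k := minn (n - 2) (a - 1 - r).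
exists k, (a * (b ^ n - 1 - P) + d * (a - 1 - k - r)); split.
- exact: geq_minl.
- by exists (b ^ n - 1 - P), (a - 1 - k - r); split => //; apply: repsum_leq sP2; lia.
- rewrite /pfrob; nia.
Qed.

Lemma gap_dominated u : ~ in_S u ->
  exists k s, [/\ k <= n - 2, in_S s & u + s = pfrob k].
Proof.
move=> gap; have [r lt_r [[P eP] | [m m_gt0 em]]] := residue_split u.
- rewrite eP in gap *; have [le_P | lt_P] := leqP (b ^ n) P.
    by case: gap; apply: in_S_ge_pow.
  exact: gap_dominated_lt_pow.
- have pow_gt0 : 0 < b ^ n by rewrite expn_gt0 b_gt0.
  exists 0, (a * (b ^ n + (m - 1)) + d * (a - 1 - r)); split => //.
    by apply: in_S_ge_pow; lia.
  rewrite /pfrob; nia.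
Qed.

Local Open Scope ring_scope.

Lemma pfrob_subE k : (k <= n - 2)%N -> (pfrob 0)%:Z - (k * d)%N%:Z = (pfrob k)%:Z.
Proof. by move=> le_k; rewrite subzn; [congr Posz | ]; rewrite /pfrob; nia. Qed.

Lemma is_frobenius_genseq : is_frobenius (genseq b n d) (pfrob 0)%:Z.
Proof.
split; first by rewrite in_sg_genseq; apply: pfrob_notin.
by case=> // z; rewrite ltz_nat in_sg_genseq; apply: in_S_gt_pfrob0.
Qed.

Lemma is_PF_pfrob k : (k <= n - 2)%N -> is_PF (genseq b n d) (pfrob k)%:Z.
Proof.
move=> le_k; split; first by rewrite in_sg_genseq; apply: pfrob_notin.
move=> _ /[dup] /in_sg_nat [s ->] /in_sg_genseq s_in; rewrite eqz_nat -lt0n => s_gt0.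
by rewrite -PoszD in_sg_genseq; apply: pfrob_add.
Qed.

End GeneratedSemigroup.

Local Open Scope ring_scope.

Theorem theorem4p3 (b n d : nat) :
  (2 <= b)%N -> (2 <= n)%N -> (0 < d)%N ->
  coprime ((b ^ n - 1) %/ (b - 1)) d ->
  exists F : int,
    is_frobenius (genseq b n d) F /\
    (forall u : int, is_PF (genseq b n d) u <->
       u \in [seq F - (k * d)%N%:Z | k <- iota 0 (n - 1)]) /\
    size (undup [seq F - (k * d)%N%:Z | k <- iota 0 (n - 1)]) = (n - 1)%N.
Proof.
move=> b_gt1 n_gt1 d_gt0; rewrite repunitE // => coprime_ad.
have frob := is_frobenius_genseq b_gt1 n_gt1 d_gt0 coprime_ad.
exists (pfrob b n d 0)%:Z; split; [by [] | split].
- have -> : [seq (pfrob b n d 0)%:Z - (k * d)%N%:Z | k <- iota 0 (n - 1)] =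
            [seq (pfrob b n d k)%:Z | k <- iota 0 (n - 1)].
    by apply/eq_in_map => k; rewrite mem_iota => /andP [_ lt_k]; apply: pfrob_subE; lia.
  apply: (is_PF_iff_dominating _ frob) => //.
  + by move=> m /mapP [k]; rewrite mem_iota => /andP [_ lt_k] ->; apply: is_PF_pfrob; lia.
  + case=> // u _ u_notin.
    have [|k [s [le_k s_in e]]] := gap_dominated b_gt1 n_gt1 d_gt0 coprime_ad (u := u).
      by move/(in_sg_genseq n d b_gt1).
    exists s%:Z; first exact/(in_sg_genseq n d b_gt1).
    by rewrite -PoszD e; apply: map_f; rewrite mem_iota; lia.
- rewrite undup_id ?size_map ?size_iota // map_inj_uniq ?iota_uniq // => k1 k2.
  by move=> /addrI /oppr_inj /eqP; rewrite eqz_nat eqn_pmul2r // => /eqP.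
Qed.
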